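(* Let $\mathcal M$ be a convex tetrahedral mesh, and let $p_s$ be a point in the interior of a tetrahedron $t_s$ of $\mathcal M$, such that no edge of $\mathcal M$ has endpoints collinear with $p_s$ and no face of $\mathcal M$ has its three vertices coplanar with $p_s$. Then for every element $k$ (vertex, edge or face) of the skeleton of $\mathcal M$ there is exactly one tetrahedron $t$ of $\mathcal M$ having $k$ on its boundary such that $k$ is invisible from $p_s$ with respect to $t$.
   Context: The skeleton of $\mathcal M$ consists of its vertices, edges and faces. An element $k$ of a tetrahedron $t$ is invisible from $p_s$ with respect to $t$ if for some point $x$ of $k$ (in the relative interior of $k$ if $k$ is an edge or face) the segment from $p_s$ to $x$ intersects the interior of $t$. *)

From HB Require Import structures.
From mathcomp Require Import all_boot all_order all_algebra.
Set Implicit Arguments. Unset Strict Implicit. Unset Printing Implicit Defensive.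
Import Order.TTheory GRing.Theory Num.Theory.
Local Open Scope ring_scope.

Section Geo.
Variable R : realFieldType.
Local Notation pt := 'rV[R]_3.

Definition in_hull (S : seq pt) (x : pt) : Prop :=
  exists w : 'I_(size S) -> R,
    [/\ (forall i, 0 <= w i), \sum_i w i = 1 & x = \sum_i w i *: S`_i].

Definition in_aff (S : seq pt) (x : pt) : Prop :=
  exists w : 'I_(size S) -> R, \sum_i w i = 1 /\ x = \sum_i w i *: S`_i.

Definition near (eps : R) (x y : pt) : Prop :=
  forall j : 'I_3, `|y 0 j - x 0 j| < eps.

Definition interior (S : seq pt) (x : pt) : Prop :=
  exists eps : R, 0 < eps /\ forall y, near eps x y -> in_hull S y.

Definition rel_interior (S : seq pt) (x : pt) : Prop :=
  in_hull S x /\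
  exists eps : R, 0 < eps /\ forall y, in_aff S y -> near eps x y -> in_hull S y.

Definition aff_indep (S : seq pt) : Prop :=
  forall c : 'I_(size S) -> R,
    \sum_i c i = 0 -> \sum_i c i *: S`_i = 0 -> forall i, c i = 0.

Definition tetrahedron (t : seq pt) : Prop := size t = 4%N /\ aff_indep t.

Definition common_vertices (t1 t2 : seq pt) : seq pt := [seq v <- t1 | v \in t2].

(* tetrahedral mesh: finitely many tetrahedra, any two meeting in the
   convex hull of their common vertices (a common face, possibly empty) *)
Definition tet_mesh (M : seq (seq pt)) : Prop :=
  (forall t, t \in M -> tetrahedron t) /\
  (forall t1 t2, t1 \in M -> t2 \in M -> forall x,
      (in_hull t1 x /\ in_hull t2 x) <-> in_hull (common_vertices t1 t2) x).

Definition mesh_region (M : seq (seq pt)) (x : pt) : Prop :=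
  exists2 t, t \in M & in_hull t x.

Definition convex_set (P : pt -> Prop) : Prop :=
  forall x y (l : R), P x -> P y -> 0 <= l <= 1 -> P ((1 - l) *: x + l *: y).

Definition convex_mesh (M : seq (seq pt)) : Prop :=
  tet_mesh M /\ convex_set (mesh_region M).

(* skeleton elements: vertices (1), edges (2), faces (3) of tetrahedra of M,
   given by their vertex lists *)
Definition skeleton_elem (M : seq (seq pt)) (k : seq pt) : Prop :=
  [/\ (1 <= size k <= 3)%N, uniq k & exists2 t, t \in M & {subset k <= t}].

Definition is_edge (M : seq (seq pt)) (a b : pt) : Prop :=
  a != b /\ exists2 t, t \in M & a \in t /\ b \in t.

Definition is_face (M : seq (seq pt)) (a b c : pt) : Prop :=
  uniq [:: a; b; c] /\ exists2 t, t \in M & [/\ a \in t, b \in t & c \in t].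

Definition collinear (S : seq pt) : Prop :=
  exists q d : pt, forall x, x \in S -> exists l : R, x = q + l *: d.

Definition coplanar (S : seq pt) : Prop :=
  exists q u v : pt, forall x, x \in S ->
    exists l m : R, x = q + l *: u + m *: v.

Definition invisible (p : pt) (t k : seq pt) : Prop :=
  exists x : pt,
    (if size k == 1%N then in_hull k x else rel_interior k x) /\
    exists l : R, 0 <= l <= 1 /\ interior t ((1 - l) *: p + l *: x).

End Geo.

From HB Require Import structures.
From mathcomp Require Import all_boot all_order all_algebra.
From mathcomp Require Import ring lra.
Import Order.TTheory GRing.Theory Num.Theory.
Local Open Scope ring_scope.
Set Implicit Arguments. Unset Strict Implicit. Unset Printing Implicit Defensive.

(* The proof works with barycentric coordinates.  For a tetrahedron t with
   vertices a, b, c, d every point x has unique affine coordinates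
   bary t x v (v a vertex); x lies in t iff they are all >= 0 and in the
   interior of t iff they are all > 0, and they depend affinely and
   continuously on x.  With these tools, for k contained in t:
     k is invisible from p w.r.t. t  <->  bary t p v > 0 for every vertex v
                                           of t not in k      (opposite_pos)
   (take the centroid of k and move slightly towards p).
   Existence: points of the segment from the centroid c of k towards p lie in
   the mesh by convexity; a tetrahedron containing such points arbitrarily
   close to c contains c, hence k, and p has nonnegative coordinates on the
   vertices outside k; they are nonzero since p is not coplanar with a face.
   Uniqueness: two tetrahedra with opposite_pos share interior points near c,
   and the mesh intersection property then forces equal vertex sets. *)

Definition i0 : 'I_3 := @Ordinal 3 0 isT.
Definition i1 : 'I_3 := @Ordinal 3 1 isT.
Definition i2 : 'I_3 := @Ordinal 3 2 isT.

Lemma ord3 (j : 'I_3) : j = i0 \/ j = i1 \/ j = i2.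
Proof.
case: j => [[|[|[|j]]] jl]; [left|right;left|right;right|by []]; exact: val_inj.
Qed.

Lemma sum3 (V : zmodType) (F : 'I_3 -> V) :
  \sum_(i < 3) F i = F i0 + F i1 + F i2.
Proof.
rewrite !big_ord_recl big_ord0 addr0 addrA.
by congr (_ + _ + _); congr F; apply: val_inj.
Qed.

Lemma uniq4 (T : eqType) (a b c d : T) : uniq [:: a; b; c; d] ->
  [/\ a != b, a != c, a != d & [/\ b != c, b != d & c != d]].
Proof.
rewrite /= !inE !negb_or => /and4P [/and3P [ab ac ad] /andP [bc bd] cd _].
by split.
Qed.

Lemma finite_min (R : realFieldType) (T : eqType) (l : seq T) (P : T -> R -> Prop) :
  (forall x, x \in l -> exists e : R, 0 < e /\ forall s, 0 < s <= e -> P x s) ->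
  exists e : R, 0 < e /\ forall x, x \in l -> forall s, 0 < s <= e -> P x s.
Proof.
elim: l => [|a l IH] H; first by exists 1; split.
have [e1 [e10 H1]] := H a (mem_head _ _).
have [e2 [e20 H2]] : exists e : R, 0 < e /\
    forall x, x \in l -> forall s, 0 < s <= e -> P x s.
  by apply: IH => x xl; apply: H; rewrite inE xl orbT.
exists (Num.min e1 e2); split; first by rewrite lt_min e10.
move=> x; rewrite inE => /orP [/eqP ->|xl] s /andP [s0];
  rewrite le_min => /andP [s1 s2].
  by apply: H1; rewrite s0.
by apply: H2 => //; rewrite s0.
Qed.

Lemma sign_pos (R : realFieldType) (f0 f1 : R) : 0 < f0 ->
  exists e : R, 0 < e /\ forall s, 0 < s <= e -> 0 < (1 - s) * f0 + s * f1.
Proof.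
move=> f00.
have n0 : 0 <= `|f1| := normr_ge0 _.
exists (f0 / (2 * (f0 + `|f1|))); split; first by apply: divr_gt0 => //; lra.
move=> s /andP [s0 se].
have h1 : s * (f0 + `|f1|) <= f0 / (2 * (f0 + `|f1|)) * (f0 + `|f1|).
  by apply: ler_wpM2r => //; lra.
have h2 : f0 / (2 * (f0 + `|f1|)) * (f0 + `|f1|) = f0 / 2 by field; lra.
have h3 : - `|f1| <= f1 by have := lexx `|f1|; rewrite ler_norml => /andP [].
have h4 : s * (- `|f1|) <= s * f1 by apply: ler_wpM2l => //; lra.
move: h1 h4; rewrite h2 mulrDr mulrBl mul1r mulrN; lra.
Qed.

Lemma sign_neg (R : realFieldType) (f0 f1 : R) : f0 < 0 ->
  exists e : R, 0 < e /\ forall s, 0 < s <= e -> (1 - s) * f0 + s * f1 < 0.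
Proof.
move=> f00; have [e [e0 H]] := sign_pos (- f1) (f0 := - f0) ltac:(lra).
by exists e; split => // s /H; rewrite !mulrN; lra.
Qed.

Section Barycentric.
Variable R : realFieldType.
Local Notation pt := 'rV[R]_3.

Lemma sum_nth_seq (V : zmodType) (S : seq pt) (F : pt -> V) :
  \sum_(i < size S) F S`_i = \sum_(v <- S) F v.
Proof. by rewrite (big_nth 0) big_mkord. Qed.

Lemma sum4 (V : zmodType) (a b c d : pt) (F : pt -> V) :
  \sum_(v <- [:: a; b; c; d]) F v = F a + F b + F c + F d.
Proof. by rewrite !big_cons big_nil addr0 !addrA. Qed.

Lemma sum_subseq (V : zmodType) (k t : seq pt) (F : pt -> V) :
  uniq k -> uniq t -> {subset k <= t} ->
  \sum_(v <- t) (if v \in k then F v else 0) = \sum_(v <- k) F v.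
Proof.
move=> uk ut kt; rewrite -big_mkcond /= -big_filter.
apply: perm_big; apply: uniq_perm => //; first exact: filter_uniq.
by move=> v; rewrite mem_filter; case vk: (v \in k) => //=; exact: kt.
Qed.

Lemma sum_single (V : zmodType) (t : seq pt) v (F : pt -> V) :
  uniq t -> v \in t -> \sum_(w <- t) (if w == v then F w else 0) = F v.
Proof.
move=> ut vt.
have sub : {subset [:: v] <= t} by move=> w; rewrite inE => /eqP ->.
have := sum_subseq F (isT : uniq [:: v]) ut sub.
rewrite big_cons big_nil addr0 => <-.
by apply: eq_bigr => w _; rewrite inE.
Qed.

Definition hull_w (S : seq pt) (x : pt) : Prop :=
  exists W : pt -> R, [/\ forall v, v \in S -> 0 <= W v,
     \sum_(v <- S) W v = 1 & x = \sum_(v <- S) W v *: v].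

Definition aff_w (S : seq pt) (x : pt) : Prop :=
  exists W : pt -> R, \sum_(v <- S) W v = 1 /\ x = \sum_(v <- S) W v *: v.

Lemma index_weights (S : seq pt) (w : 'I_(size S) -> R) : uniq S ->
  exists W : pt -> R, forall i : 'I_(size S), W S`_i = w i.
Proof.
move=> uS; exists (fun v => \sum_(i < size S | S`_i == v) w i) => i.
by rewrite (big_pred1 i) // => j /=; rewrite nth_uniq.
Qed.

Lemma in_hullE (S : seq pt) x : uniq S -> in_hull S x <-> hull_w S x.
Proof.
move=> uS; split.
  case=> w [w0 w1 wx]; have [W hW] := index_weights w uS.
  exists W; split.
  - by move=> v /(nthP 0) [i ilt <-]; rewrite (hW (Ordinal ilt)).
  - by rewrite -(sum_nth_seq _ W) -w1; apply: eq_bigr => i _.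
  - by rewrite wx -(sum_nth_seq _ (fun v => W v *: v)); apply: eq_bigr => i _; rewrite hW.
case=> W [W0 W1 Wx]; exists (fun i => W S`_i); split.
- by move=> i; apply: W0; apply: mem_nth.
- by rewrite (sum_nth_seq S W).
- by rewrite Wx (sum_nth_seq S (fun v => W v *: v)).
Qed.

Lemma in_affE (S : seq pt) x : uniq S -> in_aff S x <-> aff_w S x.
Proof.
move=> uS; split.
  case=> w [w1 wx]; have [W hW] := index_weights w uS.
  exists W; split.
  - by rewrite -(sum_nth_seq _ W) -w1; apply: eq_bigr => i _.
  - by rewrite wx -(sum_nth_seq _ (fun v => W v *: v)); apply: eq_bigr => i _; rewrite hW.
case=> W [W1 Wx]; exists (fun i => W S`_i); split.
- by rewrite (sum_nth_seq S W).
- by rewrite Wx (sum_nth_seq S (fun v => W v *: v)).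
Qed.

Lemma aff_indep_uniq (t : seq pt) : aff_indep t -> uniq t.
Proof.
move=> ai; apply/(uniqP 0) => i j ilt jlt eq.
apply/eqP; apply/negPn/negP => nij.
pose I0 := Ordinal ilt; pose J0 := Ordinal jlt.
have nIJ : I0 != J0 by apply: contra nij => /eqP [->].
pose c := fun l : 'I_(size t) => (l == I0)%:R - (l == J0)%:R :> R.
have pick1 (F : 'I_(size t) -> pt) (L : 'I_(size t)) :
    \sum_l (l == L)%:R *: F l = F L.
  rewrite (eq_bigr (fun l => if l == L then F l else 0)); last first.
    by move=> l _; case: eqP; rewrite ?scale1r ?scale0r.
  by rewrite -big_mkcond big_pred1_eq.
have pick1R (L : 'I_(size t)) : \sum_l (l == L)%:R = 1 :> R.
  rewrite (eq_bigr (fun l => if l == L then 1 else 0)); last by move=> l _; case: eqP.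
  by rewrite -big_mkcond big_pred1_eq.
have c0 : \sum_l c l = 0 by rewrite sumrB !pick1R subrr.
have c1 : \sum_l c l *: t`_l = 0.
  under eq_bigr => l _ do rewrite scalerBl.
  by rewrite sumrB !pick1 /= eq subrr.
have := ai c c0 c1 I0; rewrite /c eqxx (negbTE nIJ) subr0 => /eqP.
by rewrite oner_eq0.
Qed.

Lemma aff_indep_pt (t : seq pt) (G : pt -> R) :
  aff_indep t -> \sum_(v <- t) G v = 0 -> \sum_(v <- t) G v *: v = 0 ->
  forall v, v \in t -> G v = 0.
Proof.
move=> ai s0 s1 v vt.
have := ai (fun i => G t`_i).
rewrite (sum_nth_seq t G) (sum_nth_seq t (fun v => G v *: v)) => /(_ s0 s1).
by move=> /(_ (Ordinal (etrans (index_mem v t) vt))) /=; rewrite nth_index.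
Qed.

Lemma tet4 (t : seq pt) : tetrahedron t -> exists a b c d, t = [:: a; b; c; d].
Proof. by move=> [sz _]; case: t sz => [|a [|b [|c [|d [|e t]]]]] //= _; exists a, b, c, d. Qed.

Lemma tet_uniq (t : seq pt) : tetrahedron t -> uniq t.
Proof. by case=> _ /aff_indep_uniq. Qed.

(* The edge matrix of t, with rows t_i - t_0; it is invertible for a
   tetrahedron, and solving with it gives the barycentric coordinates. *)
Definition edge_mx (t : seq pt) : 'M[R]_3 := \matrix_(i < 3) (t`_i.+1 - t`_0).

Definition edge_coords (t : seq pt) x : pt := (x - t`_0) *m invmx (edge_mx t).

Definition bary (t : seq pt) x v : R :=
  if v == t`_1 then edge_coords t x 0 i0
  else if v == t`_2 then edge_coords t x 0 i1
  else if v == t`_3 then edge_coords t x 0 i2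
  else 1 - (edge_coords t x 0 i0 + edge_coords t x 0 i1 + edge_coords t x 0 i2).

Lemma mul_edge_mx (a b c d : pt) (u : pt) :
  u *m edge_mx [:: a; b; c; d] =
  u 0 i0 *: (b - a) + u 0 i1 *: (c - a) + u 0 i2 *: (d - a).
Proof. by apply/rowP => j; rewrite !mxE sum3 /edge_mx !mxE /=; ring. Qed.

Lemma edge_mx_unit (a b c d : pt) :
  aff_indep [:: a; b; c; d] -> edge_mx [:: a; b; c; d] \in unitmx.
Proof.
move=> ai; have /uniq4 [ab ac ad [bc bd cd]] := aff_indep_uniq ai.
rewrite unitmxE unitfE; apply/negP => /det0P [v vn0 vA].
pose G := fun w => if w == b then v 0 i0 else if w == c then v 0 i1
  else if w == d then v 0 i2 else - (v 0 i0 + v 0 i1 + v 0 i2).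
have Ga : G a = - (v 0 i0 + v 0 i1 + v 0 i2)
  by rewrite /G (negbTE ab) (negbTE ac) (negbTE ad).
have Gb : G b = v 0 i0 by rewrite /G eqxx.
have Gc : G c = v 0 i1 by rewrite /G eq_sym (negbTE bc) eqxx.
have Gd : G d = v 0 i2 by rewrite /G eq_sym (negbTE bd) eq_sym (negbTE cd) eqxx.
have G0 : \sum_(w <- [:: a; b; c; d]) G w = 0 by rewrite sum4 Ga Gb Gc Gd; ring.
have G1 : \sum_(w <- [:: a; b; c; d]) G w *: w = 0.
  rewrite sum4 Ga Gb Gc Gd -vA mul_edge_mx.
  by apply/rowP => j; rewrite !mxE; ring.
have Gz := aff_indep_pt ai G0 G1.
apply: (negP vn0); apply/eqP/rowP => j; rewrite mxE.
have := Gz b; rewrite Gb !inE eqxx orbT => /(_ isT) e0.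
have := Gz c; rewrite Gc !inE eqxx !orbT => /(_ isT) e1.
have := Gz d; rewrite Gd !inE eqxx !orbT => /(_ isT) e2.
by case: (ord3 j) => [->|[->|->]].
Qed.

Lemma bary_spec (t : seq pt) x : tetrahedron t ->
  \sum_(v <- t) bary t x v = 1 /\ \sum_(v <- t) bary t x v *: v = x.
Proof.
move=> tt; have [_ ai] := tt; move: tt => /tet4 [a [b [c [d et]]]]; subst t.
have /uniq4 [ab ac ad [bc bd cd]] := aff_indep_uniq ai.
rewrite !sum4 /bary /= (negbTE ab) (negbTE ac) (negbTE ad) eqxx eq_sym (negbTE bc)
  eqxx eq_sym (negbTE bd) eq_sym (negbTE cd) eqxx.
split; first by ring.
have E : edge_coords [:: a; b; c; d] x *m edge_mx [:: a; b; c; d] = x - a.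
  by rewrite /edge_coords /= (mulmxKV (edge_mx_unit ai)).
move: E; rewrite mul_edge_mx => E.
rewrite -[in RHS](subrK a x) -E.
by apply/rowP => j; rewrite !mxE; ring.
Qed.

Lemma bary_uniq (t : seq pt) x (W : pt -> R) :
  tetrahedron t -> \sum_(v <- t) W v = 1 -> \sum_(v <- t) W v *: v = x ->
  forall v, v \in t -> W v = bary t x v.
Proof.
move=> tt W1 Wx v vt; have [_ ai] := tt; have [b1 bx] := bary_spec x tt.
apply/eqP; rewrite -subr_eq0; apply/eqP; move: v vt.
apply: (aff_indep_pt ai); first by rewrite sumrB W1 b1 subrr.
under eq_bigr => v _ do rewrite scalerBl.
by rewrite sumrB Wx bx subrr.
Qed.

Lemma bary_hull (t : seq pt) x : tetrahedron t ->
  in_hull t x <-> (forall v, v \in t -> 0 <= bary t x v).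
Proof.
move=> tt; rewrite in_hullE ?tet_uniq //; split.
  by case=> W [W0 W1 Wx] v vt; rewrite -(bary_uniq tt W1 (esym Wx)) //; exact: W0.
by move=> H; have [b1 bx] := bary_spec x tt; exists (bary t x).
Qed.

Lemma bary_comb (t : seq pt) x y (al be : R) :
  tetrahedron t -> al + be = 1 -> forall v, v \in t ->
  bary t (al *: x + be *: y) v = al * bary t x v + be * bary t y v.
Proof.
move=> tt ab v vt; symmetry.
apply: (bary_uniq (W := fun v => al * bary t x v + be * bary t y v)) => //.
  have [b1 _] := bary_spec x tt; have [b1' _] := bary_spec y tt.
  by rewrite big_split /= -!mulr_sumr b1 b1' !mulr1.
have [_ bx] := bary_spec x tt; have [_ by'] := bary_spec y tt.
under eq_bigr => w _ do rewrite scalerDl -!scalerA.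
by rewrite big_split /= -!scaler_sumr bx by'.
Qed.

Lemma bary_vert (t : seq pt) v w : tetrahedron t ->
  v \in t -> w \in t -> bary t v w = (w == v)%:R.
Proof.
move=> tt vt wt; symmetry; apply: (bary_uniq (W := fun w => (w == v)%:R)) => //.
  rewrite -[RHS](sum_single (fun _ => 1 : R) (tet_uniq tt) vt).
  by apply: eq_bigr => u _; case: eqP.
rewrite -[RHS](sum_single (fun w => w) (tet_uniq tt) vt).
by apply: eq_bigr => u _; case: eqP; rewrite ?scale1r ?scale0r.
Qed.

Lemma bary_transfer (k t : seq pt) x (W : pt -> R) :
  tetrahedron t -> uniq k -> {subset k <= t} ->
  \sum_(v <- k) W v = 1 -> \sum_(v <- k) W v *: v = x ->
  forall v, v \in t -> bary t x v = if v \in k then W v else 0.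
Proof.
move=> tt uk kt W1 Wx v vt; symmetry.
apply: (bary_uniq (W := fun v => if v \in k then W v else 0)) => //.
  by rewrite sum_subseq // tet_uniq.
rewrite -Wx -(sum_subseq (fun v => W v *: v) uk (tet_uniq tt) kt).
by apply: eq_bigr => u _; case: ifP; rewrite ?scale0r.
Qed.

Lemma bary_cont (t : seq pt) x (d : R) : 0 < d ->
  exists eps : R, 0 < eps /\ forall y, near eps x y ->
    forall v, `|bary t y v - bary t x v| < d.
Proof.
move=> d0; set B := invmx (edge_mx t).
pose Kc := fun i => `|B i0 i| + `|B i1 i| + `|B i2 i|.
pose K := Kc i0 + Kc i1 + Kc i2 + 1.
have Kc0 i : 0 <= Kc i by rewrite /Kc; do 3? (apply: addr_ge0 => //).
have KcK i : Kc i <= K.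
  have := Kc0 i0; have := Kc0 i1; have := Kc0 i2.
  by case: (ord3 i) => [->|[->|->]]; rewrite /K; lra.
have K0 : 0 < K by rewrite /K; have := Kc0 i0; have := Kc0 i1; have := Kc0 i2; lra.
exists (d / (4 * K)); split; first by apply: divr_gt0 => //; lra.
move=> y ny; set e := d / (4 * K).
have eK : e * K = d / 4 by rewrite /e; field; lra.
have e0 : 0 < e by apply: divr_gt0 => //; lra.
pose D := edge_coords t y - edge_coords t x.
have DE : D = (y - x) *m B.
  by rewrite /D /edge_coords -mulmxBl; congr (_ *m _); rewrite opprB addrA subrK.
have Dij i : edge_coords t y 0 i - edge_coords t x 0 i = D 0 i by rewrite /D !mxE.
have Db i : `|D 0 i| <= d / 4.
  rewrite DE mxE sum3.
  have h m : `|(y - x) 0 m * B m i| <= e * `|B m i|.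
    rewrite normrM; apply: ler_wpM2r => //.
    by rewrite !mxE; apply: ltW; exact: (ny m).
  apply: (le_trans (ler_normD _ _)); rewrite -eK.
  have := ler_normD ((y - x) 0 i0 * B i0 i) ((y - x) 0 i1 * B i1 i).
  have := h i0; have := h i1; have := h i2.
  have : e * Kc i <= e * K by apply: ler_wpM2l; [exact: ltW|exact: KcK].
  rewrite /Kc; lra.
move=> v; rewrite /bary.
case: ifP => _; first by rewrite Dij; have := Db i0; lra.
case: ifP => _; first by rewrite Dij; have := Db i1; lra.
case: ifP => _; first by rewrite Dij; have := Db i2; lra.
have -> : 1 - (edge_coords t y 0 i0 + edge_coords t y 0 i1 + edge_coords t y 0 i2) -
   (1 - (edge_coords t x 0 i0 + edge_coords t x 0 i1 + edge_coords t x 0 i2)) =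
   - (D 0 i0 + D 0 i1 + D 0 i2) by rewrite -!Dij; ring.
rewrite normrN; apply: (le_lt_trans (ler_normD _ _)).
have := ler_normD (D 0 i0) (D 0 i1).
have := Db i0; have := Db i1; have := Db i2; lra.
Qed.

(* Interior points have positive coordinates: otherwise moving slightly away
   from a vertex with coordinate <= 0 leaves the tetrahedron. *)
Lemma interior_pos (t : seq pt) x : tetrahedron t ->
  interior t x -> forall v, v \in t -> 0 < bary t x v.
Proof.
move=> tt [eps [e0 H]] v vt; rewrite ltNge; apply/negP => bx.
pose u := x - v.
pose N := `|u 0 i0| + `|u 0 i1| + `|u 0 i2|.
have N0 : 0 <= N by rewrite /N; do 2? apply: addr_ge0 => //.
pose dl := eps / (2 * (1 + N)).
have dl0 : 0 < dl by apply: divr_gt0 => //; lra.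
pose y := (1 + dl) *: x + (- dl) *: v.
have ny : near eps x y.
  move=> j; rewrite /y !mxE.
  have -> : (1 + dl) * x 0 j + - dl * v 0 j - x 0 j = dl * u 0 j
    by rewrite /u !mxE; ring.
  rewrite normrM (gtr0_norm dl0).
  have uN : `|u 0 j| <= N.
    have := normr_ge0 (u 0 i0); have := normr_ge0 (u 0 i1); have := normr_ge0 (u 0 i2).
    by case: (ord3 j) => [->|[->|->]]; rewrite /N; lra.
  have : dl * `|u 0 j| <= dl * (1 + N) by apply: ler_wpM2l; lra.
  have -> : dl * (1 + N) = eps / 2 by rewrite /dl; field; lra.
  lra.
have := H _ ny; rewrite (bary_hull _ tt) => /(_ v vt).
rewrite /y bary_comb //; last by ring.
rewrite (bary_vert tt vt vt) eqxx.
have : 0 <= dl * - bary t x v by apply: mulr_ge0; [exact: ltW | rewrite oppr_ge0].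
rewrite /= mulr1 mulrN mulrDl mul1r; lra.
Qed.

Lemma pos_interior (t : seq pt) x : tetrahedron t ->
  (forall v, v \in t -> 0 < bary t x v) -> interior t x.
Proof.
move=> tt H.
have [e [e0 He]] := finite_min (P := fun v (s : R) => s <= bary t x v)
  (fun v vt => ex_intro _ (bary t x v) (conj (H v vt) (fun s h => proj2 (andP h)))).
have [eps [eps0 Hc]] := bary_cont t x e0.
exists eps; split => // y ny; rewrite (bary_hull _ tt) => v vt.
have := Hc y ny v; rewrite ltr_norml => /andP [h _].
have := He v vt e; rewrite e0 lexx => /(_ isT); lra.
Qed.

Lemma coplanar_comb (x a b c : pt) (al be ga : R) :
  (forall j, x 0 j = al * a 0 j + be * b 0 j + ga * c 0 j) -> al + be + ga = 1 ->
  coplanar [:: x; a; b; c].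
Proof.
move=> E s1; exists a, (b - a), (c - a) => y; rewrite !inE => /or4P [] /eqP ->.
- exists be, ga; apply/rowP => j; rewrite E !mxE.
  have -> : al = 1 - be - ga by lra.
  ring.
- by exists 0, 0; rewrite !scale0r !addr0.
- by exists 1, 0; rewrite scale1r scale0r addr0 addrC subrK.
- by exists 0, 1; rewrite scale1r scale0r addr0 addrC subrK.
Qed.

Lemma bary_zero_coplanar (M : seq (seq pt)) t p v :
  t \in M -> tetrahedron t -> v \in t -> bary t p v = 0 ->
  exists a b c, is_face M a b c /\ coplanar [:: p; a; b; c].
Proof.
move=> tM tt vt b0; have [s1 sx] := bary_spec p tt.
have ut := tet_uniq tt.
move: tt vt b0 s1 sx ut tM => /tet4 [a [b [c [d ->]]]].
rewrite !sum4 => vt b0 s1 sx ut tM.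
have /uniq4 [ab ac ad [bc bd cd]] := ut.
pose B := bary [:: a; b; c; d] p.
have E j : p 0 j = B a * a 0 j + B b * b 0 j + B c * c 0 j + B d * d 0 j.
  by rewrite -{1}sx !mxE.
have face x y z : uniq [:: x; y; z] -> x \in [:: a; b; c; d] ->
    y \in [:: a; b; c; d] -> z \in [:: a; b; c; d] -> is_face M x y z.
  by move=> uxyz hx hy hz; split => //; exists [:: a; b; c; d].
have [ha hb hc hd] : [/\ a \in [:: a; b; c; d], b \in [:: a; b; c; d],
    c \in [:: a; b; c; d] & d \in [:: a; b; c; d]] by rewrite !inE !eqxx !orbT.
have sB : B a + B b + B c + B d = 1 by exact: s1.
move: vt; rewrite !inE => /or4P [] /eqP ev; rewrite ev -/B in b0; move: sB; rewrite b0 => sB.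
- exists b, c, d; split; first by apply: face; rewrite //= !inE negb_or bc bd cd.
  apply: (coplanar_comb (al := B b) (be := B c) (ga := B d)); last by lra.
  by move=> j; rewrite E b0; ring.
- exists a, c, d; split; first by apply: face; rewrite //= !inE negb_or ac ad cd.
  apply: (coplanar_comb (al := B a) (be := B c) (ga := B d)); last by lra.
  by move=> j; rewrite E b0; ring.
- exists a, b, d; split; first by apply: face; rewrite //= !inE negb_or ab ad bd.
  apply: (coplanar_comb (al := B a) (be := B b) (ga := B d)); last by lra.
  by move=> j; rewrite E b0; ring.
- exists a, b, c; split; first by apply: face; rewrite //= !inE negb_or ab ac bc.
  apply: (coplanar_comb (al := B a) (be := B b) (ga := B c)); last by lra.
  by move=> j; rewrite E b0; ring.
Qed.

(* Mesh property: if y lies in t1 and t2, every vertex of t1 carrying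
   positive weight for y is a common vertex, since y is a convex combination
   of common vertices. *)
Lemma mesh_pos_vertex (M : seq (seq pt)) t1 t2 y v :
  tet_mesh M -> t1 \in M -> t2 \in M -> in_hull t1 y -> in_hull t2 y ->
  v \in t1 -> 0 < bary t1 y v -> v \in t2.
Proof.
move=> [tetM meshM] t1M t2M h1 h2 vt1 bp.
have tt1 := tetM _ t1M.
have := (meshM _ _ t1M t2M y).1 (conj h1 h2).
have uc : uniq (common_vertices t1 t2) by apply: filter_uniq; exact: tet_uniq.
rewrite in_hullE // => -[W [_ W1 Wx]].
have sub : {subset common_vertices t1 t2 <= t1}
  by move=> w; rewrite mem_filter => /andP [].
have := bary_transfer tt1 uc sub W1 (esym Wx) vt1.
rewrite mem_filter vt1 andbT; case: (v \in t2) => // e.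
by move: bp; rewrite e ltxx.
Qed.

Definition centroid (k : seq pt) : pt := \sum_(v <- k) (size k)%:R^-1 *: v.

Lemma sum_uniform (k : seq pt) :
  (0 < size k)%N -> \sum_(v <- k) (size k)%:R^-1 = 1 :> R.
Proof.
move=> k0; rewrite -(sum_nth_seq k (fun _ => (size k)%:R^-1)) sumr_const card_ord.
by rewrite -[LHS]mulr_natr mulVf // pnatr_eq0 -lt0n.
Qed.

Lemma bary_centroid (t k : seq pt) :
  tetrahedron t -> uniq k -> (0 < size k)%N -> {subset k <= t} ->
  forall v, v \in t -> bary t (centroid k) v = if v \in k then (size k)%:R^-1 else 0.
Proof.
move=> tt uk k0 kt.
exact: (bary_transfer (W := fun _ => (size k)%:R^-1) tt uk kt (sum_uniform k0)).
Qed.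

(* The combinatorial form of invisibility: p lies strictly on the inner side
   of every face plane of t through k. *)
Definition opposite_pos (p : pt) (t k : seq pt) : Prop :=
  forall v, v \in t -> v \notin k -> 0 < bary t p v.

Section Visibility.
Variables (t k : seq pt) (p : pt).
Hypotheses (tt : tetrahedron t) (uk : uniq k) (kt : {subset k <= t}).

Lemma invisible_opposite_pos : invisible p t k -> opposite_pos p t k.
Proof.
move=> [x [hx [l [/andP [l0 l1] hz]]]] v vt vk.
have hk : in_hull k x by move: hx; case: (size k == 1%N) => //; case.
move: hk; rewrite in_hullE // => -[W [_ W1 Wx]].
have := interior_pos tt hz vt.
rewrite bary_comb //; last by ring.
rewrite (bary_transfer tt uk kt W1 (esym Wx) vt) (negbTE vk) mulr0 addr0 => h.
rewrite ltNge; apply/negP => bp.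
have : (1 - l) * bary t p v <= 0 by apply: mulr_ge0_le0 => //; lra.
lra.
Qed.

Hypothesis k0 : (0 < size k)%N.

Lemma opposite_pos_near_centroid : opposite_pos p t k ->
  exists e : R, 0 < e /\ forall v, v \in t ->
    forall s, 0 < s <= e -> 0 < bary t ((1 - s) *: centroid k + s *: p) v.
Proof.
move=> G; have n0 : 0 < (size k)%:R^-1 :> R by rewrite invr_gt0 ltr0n.
apply: (finite_min (P := fun v s => 0 < bary t ((1 - s) *: centroid k + s *: p) v)).
move=> v vt; have hc := bary_centroid tt uk k0 kt vt.
case vk: (v \in k) in hc.
  have [e [e0 He]] := sign_pos (bary t p v) n0.
  exists e; split => // s hs; rewrite bary_comb //; last by ring.
  by rewrite hc; exact: He.
exists 1; split => // s /andP [s0 _]; rewrite bary_comb //; last by ring.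
by rewrite hc mulr0 add0r; apply: mulr_gt0 => //; apply: G => //; rewrite vk.
Qed.

Lemma centroid_rel_interior : rel_interior k (centroid k).
Proof.
have n0 : 0 < (size k)%:R^-1 :> R by rewrite invr_gt0 ltr0n.
split.
  rewrite in_hullE //; exists (fun _ => (size k)%:R^-1); split => //.
  - by move=> _ _; exact: ltW.
  - exact: sum_uniform.
have [eps [eps0 Hc]] := bary_cont t (centroid k) n0.
exists eps; split => // y; rewrite in_affE // => -[W [W1 Wx]] ny.
rewrite in_hullE //; exists W; split => // v vk; have vt := kt vk.
have := Hc y ny v; rewrite (bary_centroid tt uk k0 kt vt) vk.
rewrite (bary_transfer tt uk kt W1 (esym Wx) vt) vk ltr_norml => /andP [h _].
lra.
Qed.

Lemma opposite_pos_invisible : opposite_pos p t k -> invisible p t k.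
Proof.
move=> G; have [e [e0 H]] := opposite_pos_near_centroid G.
have ck := centroid_rel_interior.
exists (centroid k); split; first by case: ifP => _; [case: ck|].
pose s := Num.min e 1.
have s0 : 0 < s by rewrite lt_min e0 ltr01.
have se : s <= e by rewrite ge_min lexx.
have s1 : s <= 1 by rewrite ge_min lexx orbT.
exists (1 - s); split; first by apply/andP; split; lra.
rewrite (_ : 1 - (1 - s) = s); last by ring.
by rewrite addrC; apply: pos_interior => // v vt; apply: H => //; rewrite s0 se.
Qed.

End Visibility.

(* Uniqueness: two tetrahedra through k both having p beyond the faces
   through k contain a common point with positive coordinates in each. *)
Lemma opposite_pos_unique (M : seq (seq pt)) (t t' k : seq pt) p :
  tet_mesh M -> t \in M -> t' \in M -> uniq k -> (0 < size k)%N ->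
  {subset k <= t} -> {subset k <= t'} ->
  opposite_pos p t k -> opposite_pos p t' k -> t' =i t.
Proof.
move=> mM tM t'M uk k0 kt kt' G G'.
have tt := mM.1 _ tM; have tt' := mM.1 _ t'M.
have [e [e0 H]] := opposite_pos_near_centroid tt uk kt k0 G.
have [e' [e0' H']] := opposite_pos_near_centroid tt' uk kt' k0 G'.
pose s := Num.min e e'.
have s0 : 0 < s by rewrite lt_min e0 e0'.
have hs : 0 < s <= e by rewrite s0 ge_min lexx.
have hs' : 0 < s <= e' by rewrite s0 ge_min lexx orbT.
set y := (1 - s) *: centroid k + s *: p.
have hy : in_hull t y by rewrite (bary_hull _ tt) => v vt; exact/ltW/H.
have hy' : in_hull t' y by rewrite (bary_hull _ tt') => v vt; exact/ltW/H'.
move=> v; apply/idP/idP => hv.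
  exact: (mesh_pos_vertex mM t'M tM hy' hy hv (H' v hv s hs')).
exact: (mesh_pos_vertex mM tM t'M hy hy' hv (H v hv s hs)).
Qed.

(* Close enough to the centroid c of k along the segment towards p, any
   tetrahedron of the mesh containing the segment point already contains c:
   a negative coordinate of c stays negative nearby. *)
Lemma segment_start_in_hull (M : seq (seq pt)) (c p : pt) :
  tet_mesh M -> exists e : R, 0 < e /\ forall t, t \in M -> forall s, 0 < s <= e ->
    in_hull t ((1 - s) *: c + s *: p) -> in_hull t c.
Proof.
move=> mM.
apply: (finite_min (P := fun t s => in_hull t ((1 - s) *: c + s *: p) -> in_hull t c)).
move=> t tM; have tt := mM.1 _ tM.
case: (boolP (has (fun v => bary t c v < 0) t)) => [/hasP [v vt bv]|hn].
  have [e [e0 He]] := sign_neg (bary t p v) bv.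
  exists e; split => // s hs; rewrite (bary_hull _ tt) => /(_ v vt).
  rewrite bary_comb //; last by ring.
  by have := He s hs; lra.
exists 1; split => // s _ _; rewrite (bary_hull _ tt) => v vt.
by move/hasPn: hn => /(_ v vt); rewrite -leNgt.
Qed.

Lemma exists_tet_towards (M : seq (seq pt)) (k : seq pt) p :
  convex_mesh M -> mesh_region M p -> skeleton_elem M k ->
  exists2 t, t \in M & {subset k <= t} /\
    forall v, v \in t -> v \notin k -> 0 <= bary t p v.
Proof.
move=> [mM convM] hp [/andP [k0 _] uk [t0 t0M kt0]].
have n0 : 0 < (size k)%:R^-1 :> R by rewrite invr_gt0 ltr0n.
set c := centroid k.
have tt0 := mM.1 _ t0M.
have hc0 : in_hull t0 c.
  rewrite (bary_hull _ tt0) => v vt; rewrite (bary_centroid tt0 uk k0 kt0 vt).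
  by case: ifP => // _; exact: ltW.
have [e [e0 H]] := segment_start_in_hull c p mM.
pose s := Num.min e 1.
have s0 : 0 < s by rewrite lt_min e0 ltr01.
have se : 0 < s <= e by rewrite s0 ge_min lexx.
have s1 : s <= 1 by rewrite ge_min lexx orbT.
have [t tM hy] : mesh_region M ((1 - s) *: c + s *: p).
  by apply: convM => //; [exists t0 | rewrite (ltW s0) s1].
have tt := mM.1 _ tM.
have hc : in_hull t c := H t tM s se hy.
have kt : {subset k <= t}.
  move=> v vk; apply: (mesh_pos_vertex mM t0M tM hc0 hc (kt0 v vk)).
  by rewrite (bary_centroid tt0 uk k0 kt0 (kt0 v vk)) vk.
exists t => //; split => // v vt vk.
move: hy; rewrite (bary_hull _ tt) => /(_ v vt).
rewrite bary_comb //; last by ring.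
rewrite (bary_centroid tt uk k0 kt vt) (negbTE vk) mulr0 add0r => h.
rewrite leNgt; apply/negP => hb.
have : s * bary t p v < 0 by rewrite pmulr_rlt0.
lra.
Qed.

End Barycentric.

Theorem mainTheorem9 (R : realFieldType) (M : seq (seq 'rV[R]_3))
    (ts : seq 'rV[R]_3) (ps : 'rV[R]_3) :
  convex_mesh M -> ts \in M -> interior ts ps ->
  (forall a b, is_edge M a b -> ~ collinear [:: ps; a; b]) ->
  (forall a b c, is_face M a b c -> ~ coplanar [:: ps; a; b; c]) ->
  forall k, skeleton_elem M k ->
  exists t, [/\ t \in M, {subset k <= t}, invisible ps t k &
    forall t', t' \in M -> {subset k <= t'} -> invisible ps t' k -> t' =i t].
Proof.
move=> cM tsM hps _ Hface k sk.
have [mM _] := cM; have [/andP [k0 _] uk _] := sk.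
have hp : mesh_region M ps.
  have [eps [eps0 H]] := hps.
  by exists ts => //; apply: H => j; rewrite subrr normr0.
have [t tM [kt Hnn]] := exists_tet_towards cM hp sk.
have tt := mM.1 _ tM.
(* genericity turns the nonnegative coordinates into positive ones *)
have G : opposite_pos ps t k.
  move=> v vt vk; rewrite lt_def Hnn // andbT; apply/negP => /eqP b0.
  have [a [b [d [hf hcop]]]] := bary_zero_coplanar tM tt vt b0.
  exact: (Hface _ _ _ hf hcop).
exists t; split => //; first exact: opposite_pos_invisible.
move=> t' t'M kt' inv'.
apply: (opposite_pos_unique mM tM t'M uk k0 kt kt' G).
exact: invisible_opposite_pos (mM.1 _ t'M) uk kt' inv'.
Qed.
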